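(* Let $e_1=(1:0:0)$, $e_2=(0:1:0)$, $e_3=(0:0:1)$, $e_4=(1:1:1)$, let $a\vee b$ denote the line through $a,b$, and set $\mathcal T_1=\{(e_1,e_1\vee e_3)\}$, $\mathcal T_2=\{e_2,(e_1,e_1\vee e_3)\}$, $\mathcal T_3=\{(e_1,e_1\vee e_3),(e_2,e_2\vee e_3)\}$, $\mathcal T_4=\{e_2,e_3,(e_1,e_1\vee e_4)\}$. Then for $i=1,2,3,4$ one has $\operatorname{span}(F_{\mathcal T_i})=I_{\mathcal T_i}$.
   Context: $H_k\subseteq\mathbb R[x,y,z]$: real ternary forms of degree $k$; $P_{3,4}=\{f\in H_4: f\ge0\text{ on }\mathbb P^2(\mathbb R)\}$. Local notation. For $p\in\mathbb P^2(\mathbb R)$, affine coordinates centered at $p$ are obtained by an invertible real linear change of coordinates sending $p$ to $(0:0:1)$ and setting $z=1$; $f\in H_4$ becomes $f(x,y)=\sum_{i+j\le4}a_{ij}x^iy^j$, and $\operatorname{ord}_p(f)$ is the least $i+j$ with $a_{ij}\ne0$. For a real line $l\ni p$ choose such coordinates with $l=\{y=0\}$, and for $\operatorname{ord}_pf\ge2$ put $\tilde f(x,y)=f(x,xy)/x^2$. Sets. $F_s=\{f\in P_{3,4}: f(s)=0\}$, $I_s=\{f\in H_4:\operatorname{ord}_sf\ge2\}$; $F_{(p,l)}=\{f\in P_{3,4}: f(p)=0,\ \tilde f(0,0)=0\}$, $I_{(p,l)}=\{f\in H_4: a_{00}=a_{10}=a_{01}=a_{20}=a_{11}=a_{30}=0\}$.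 For a configuration $\mathcal S=\{s_1,\dots,s_n,(p_1,l_1),\dots,(p_m,l_m)\}$ (pairwise distinct real points, real lines $l_j\ni p_j$): $F_{\mathcal S}=\bigcap_iF_{s_i}\cap\bigcap_jF_{(p_j,l_j)}$, $I_{\mathcal S}=\bigcap_iI_{s_i}\cap\bigcap_jI_{(p_j,l_j)}$. *)

From Stdlib Require Import Reals List.
Import ListNotations.
Open Scope R_scope.

(** Points of R^3 (homogeneous coordinates of points of P^2(R)). *)
Definition pt : Type := (R * R * R)%type.
Definition px (p : pt) : R := fst (fst p).
Definition py (p : pt) : R := snd (fst p).
Definition pz (p : pt) : R := snd p.
Definition dot (a b : pt) : R := px a * px b + py a * py b + pz a * pz b.
Definition cross (a b : pt) : pt :=
  (py a * pz b - pz a * py b, pz a * px b - px a * pz b, px a * py b - py a * px b).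
Definition smul (c : R) (a : pt) : pt := (c * px a, c * py a, c * pz a).

(** A real projective line is encoded by a normal vector n <> 0 :
    l = { v | dot n v = 0 }.  The line a \/ b through a,b has normal cross a b. *)
Definition on_line (n : pt) (v : pt) : Prop := dot n v = 0.
Definition join (a b : pt) : pt := cross a b.

Definition e1 : pt := (1, 0, 0).
Definition e2 : pt := (0, 1, 0).
Definition e3 : pt := (0, 0, 1).
Definition e4 : pt := (1, 1, 1).

Fixpoint sumR (n : nat) (g : nat -> R) : R :=
  match n with O => 0 | S k => sumR k g + g k end.

Definition quartic (c : nat -> nat -> R) (p : pt) : R :=
  sumR 5 (fun i => sumR (5 - i) (fun j =>
    c i j * px p ^ i * py p ^ j * pz p ^ (4 - i - j))).

Definition H4 (f : pt -> R) : Prop := exists c, forall p, f p = quartic c p.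

Definition P34 (f : pt -> R) : Prop := H4 f /\ forall p, 0 <= f p.

(** 3x3 real matrices (indices 0..2) acting on R^3. *)
Definition mat3 : Type := nat -> nat -> R.
Definition mapply (m : mat3) (v : pt) : pt :=
  (m 0%nat 0%nat * px v + m 0%nat 1%nat * py v + m 0%nat 2%nat * pz v,
   m 1%nat 0%nat * px v + m 1%nat 1%nat * py v + m 1%nat 2%nat * pz v,
   m 2%nat 0%nat * px v + m 2%nat 1%nat * py v + m 2%nat 2%nat * pz v).
Definition det3 (m : mat3) : R :=
  m 0%nat 0%nat * (m 1%nat 1%nat * m 2%nat 2%nat - m 1%nat 2%nat * m 2%nat 1%nat)
  - m 0%nat 1%nat * (m 1%nat 0%nat * m 2%nat 2%nat - m 1%nat 2%nat * m 2%nat 0%nat)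
  + m 0%nat 2%nat * (m 1%nat 0%nat * m 2%nat 1%nat - m 1%nat 1%nat * m 2%nat 0%nat).

(** An invertible linear change of coordinates: new coordinates v correspond
    to old coordinates [mapply m v].  It sends p to (0:0:1) iff m e3 is a
    nonzero multiple of p. *)
Definition centered_at (m : mat3) (p : pt) : Prop :=
  det3 m <> 0 /\ exists lam, lam <> 0 /\ mapply m e3 = smul lam p.

(** ... and additionally sends the line l (normal n, through p) to {y = 0}. *)
Definition centered_at_line (m : mat3) (p n : pt) : Prop :=
  centered_at m p /\ on_line n (mapply m e1).

Definition affine_poly (b : nat -> nat -> R) (x y : R) : R :=
  sumR 5 (fun i => sumR (5 - i) (fun j => b i j * x ^ i * y ^ j)).
Definition local_coeffs (f : pt -> R) (m : mat3) (b : nat -> nat -> R) : Prop :=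
  forall x y, f (mapply m (x, y, 1)) = affine_poly b x y.

Definition ord_ge2 (b : nat -> nat -> R) : Prop :=
  b 0%nat 0%nat = 0 /\ b 1%nat 0%nat = 0 /\ b 0%nat 1%nat = 0.

(** tilde f (x,y) = f(x,xy)/x^2 (for ord >= 2), as a polynomial. *)
Definition tilde_poly (b : nat -> nat -> R) (x y : R) : R :=
  sumR 5 (fun i => sumR (5 - i) (fun j =>
    if Nat.leb 2 (i + j) then b i j * x ^ (i + j - 2) * y ^ j else 0)).

Definition Fpt (s : pt) (f : pt -> R) : Prop := P34 f /\ f s = 0.
Definition Ipt (s : pt) (f : pt -> R) : Prop :=
  H4 f /\ exists m b, centered_at m s /\ local_coeffs f m b /\ ord_ge2 b.

Definition Fpl (p n : pt) (f : pt -> R) : Prop :=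
  P34 f /\ f p = 0 /\
  exists m b, centered_at_line m p n /\ local_coeffs f m b /\ ord_ge2 b /\
              tilde_poly b 0 0 = 0.
Definition Ipl (p n : pt) (f : pt -> R) : Prop :=
  H4 f /\ exists m b, centered_at_line m p n /\ local_coeffs f m b /\
    b 0%nat 0%nat = 0 /\ b 1%nat 0%nat = 0 /\ b 0%nat 1%nat = 0 /\
    b 2%nat 0%nat = 0 /\ b 1%nat 1%nat = 0 /\ b 3%nat 0%nat = 0.

Record config : Type := Config { cpts : list pt; cpairs : list (pt * pt) }.

Definition FS (S : config) (f : pt -> R) : Prop :=
  (forall s, In s (cpts S) -> Fpt s f) /\
  (forall q, In q (cpairs S) -> Fpl (fst q) (snd q) f).
Definition IS (S : config) (f : pt -> R) : Prop :=
  H4 f /\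
  (forall s, In s (cpts S) -> Ipt s f) /\
  (forall q, In q (cpairs S) -> Ipl (fst q) (snd q) f).

Fixpoint lincomb (l : list (R * (pt -> R))) (p : pt) : R :=
  match l with
  | [] => 0
  | (a, g) :: t => a * g p + lincomb t p
  end.
Definition in_span (F : (pt -> R) -> Prop) (f : pt -> R) : Prop :=
  exists l : list (R * (pt -> R)),
    (forall q, In q l -> F (snd q)) /\ forall p, f p = lincomb l p.

Definition T1 : config := Config [] [(e1, join e1 e3)].
Definition T2 : config := Config [e2] [(e1, join e1 e3)].
Definition T3 : config := Config [] [(e1, join e1 e3); (e2, join e2 e3)].
Definition T4 : config := Config [e2; e3] [(e1, join e1 e4)].
Definition Tconf (i : nat) : config :=
  match i with 1 => T1 | 2 => T2 | 3 => T3 | _ => T4 end.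

From Stdlib Require Import Reals List Lra Lia FunctionalExtensionality.
Import ListNotations.
Open Scope R_scope.

(* Every condition involved is expressed through the coefficients c of a quartic f.
   1. Local expansion.  In an affine chart centred at e1 = (1:0:0), the low-order
      coefficients of f are read off from the binary forms ("slices") multiplying
      x^4, x^3, x^2, x in f; comparing coefficients of a polynomial in a scaling
      parameter t gives them without expanding the whole chart change.  Charts
      centred at e2, e3 reduce to this case by permuting the coordinates.
   2. Hence membership of f in each I_s, I_(p,l) occurring in T_i forces linear
      conditions [config_cond i] on c (chart independence); conversely these
      conditions give I_T-membership in explicit permutation (or shear) charts.
   3. F_(p,l) = P_{3,4} /\ I_(p,l), and F_s implies I_s for s = e2, e3, by
      nonnegativity (the lowest odd-order term of a nonnegative polynomial vanishes).
   4. The conditions are linear, so span(F_T) satisfies them, hence lies in I_T;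
      conversely every quartic satisfying them is an explicit linear combination of
      squares of quadratic forms that lie in F_T. *)

Local Notation coef := (nat -> nat -> R).



Ltac pt_eq := apply f_equal2; [apply f_equal2; ring | ring].

Lemma nonzero_factor a x : a <> 0 -> a * x = 0 -> x = 0.
Proof. intros Ha H. destruct (Rmult_integral _ _ H); [contradiction | assumption]. Qed.

Lemma lin2_zero a b p q r s :
  a * p + b * q = 0 -> a * r + b * s = 0 -> p * s - q * r <> 0 -> a = 0 /\ b = 0.
Proof.
  intros H1 H2 Hdet. split.
  - apply (nonzero_factor (p * s - q * r)); [exact Hdet |].
    replace ((p * s - q * r) * a) with (s * (a * p + b * q) - q * (a * r + b * s)) by ring.
    rewrite H1, H2; ring.
  - apply (nonzero_factor (p * s - q * r)); [exact Hdet |].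
    replace ((p * s - q * r) * b) with (p * (a * r + b * s) - r * (a * p + b * q)) by ring.
    rewrite H1, H2; ring.
Qed.

Lemma poly4_coeffs_eq a0 a1 a2 a3 a4 b0 b1 b2 b3 b4 :
  (forall t, a0 + a1 * t + a2 * t ^ 2 + a3 * t ^ 3 + a4 * t ^ 4
           = b0 + b1 * t + b2 * t ^ 2 + b3 * t ^ 3 + b4 * t ^ 4) ->
  a0 = b0 /\ a1 = b1 /\ a2 = b2 /\ a3 = b3.
Proof.
  intros H. pose proof (H 0). pose proof (H 1). pose proof (H (-1)).
  pose proof (H 2). pose proof (H (-2)). simpl in *. repeat split; lra.
Qed.

Lemma small_t_nonneg a b c d :
  (forall t, 0 < t <= 1 -> 0 <= a + b * t + c * t ^ 2 + d * t ^ 3) -> 0 <= a.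
Proof.
  intros H. set (K := Rabs b + Rabs c + Rabs d).
  assert (HK : 0 <= K) by (pose proof (Rabs_pos b); pose proof (Rabs_pos c);
                          pose proof (Rabs_pos d); unfold K; lra).
  assert (Hlin : forall t, 0 < t <= 1 -> 0 <= a + K * t).
  { intros t Ht. specialize (H t Ht).
    assert (b * t <= Rabs b * t) by (apply Rmult_le_compat_r; [lra | apply Rle_abs]).
    assert (c * t ^ 2 <= Rabs c * t).
    { assert (c * t ^ 2 <= Rabs c * t ^ 2)
        by (apply Rmult_le_compat_r; [apply pow2_ge_0 | apply Rle_abs]).
      assert (t ^ 2 <= t) by (simpl; nra).
      pose proof (Rabs_pos c). nra. }
    assert (d * t ^ 3 <= Rabs d * t).
    { assert (0 <= t ^ 3) by (apply pow_le; lra).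
      assert (d * t ^ 3 <= Rabs d * t ^ 3)
        by (apply Rmult_le_compat_r; [lra | apply Rle_abs]).
      assert (t ^ 3 <= t) by (simpl; nra).
      pose proof (Rabs_pos d). nra. }
    unfold K; lra. }
  destruct (Rle_lt_dec 0 a) as [Ha | Ha]; [exact Ha | exfalso].
  set (t := - a / (2 * (K - a))).
  assert (Ht : t * (2 * (K - a)) = - a) by (unfold t; field; lra).
  assert (0 < t) by (unfold t; apply Rdiv_lt_0_compat; lra).
  assert (t <= 1) by nra.
  specialize (Hlin t (conj H0 H1)). nra.
Qed.

Lemma lowest_coeff_nonneg n a b c d :
  (forall t, 0 <= t ^ n * (a + b * t + c * t ^ 2 + d * t ^ 3)) -> 0 <= a.
Proof.
  intros H. apply (small_t_nonneg a b c d). intros t Ht.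
  assert (Hpos : 0 < t ^ n) by (apply pow_lt; lra).
  specialize (H t). destruct (Rle_lt_dec 0 (a + b * t + c * t ^ 2 + d * t ^ 3)); nra.
Qed.

Lemma odd_lowest_coeff_zero n a b c d :
  (forall t, 0 <= t ^ (2 * n + 1) * (a + b * t + c * t ^ 2 + d * t ^ 3)) -> a = 0.
Proof.
  intros H.
  assert (Hodd : forall t, (- t) ^ (2 * n + 1) = - t ^ (2 * n + 1)).
  { intro t. rewrite !pow_add, !pow_mult. replace ((- t) ^ 2) with (t ^ 2) by ring. ring. }
  assert (0 <= a) by exact (lowest_coeff_nonneg _ _ _ _ _ H).
  assert (0 <= - a).
  { apply (lowest_coeff_nonneg (2 * n + 1) (- a) b (- c) d). intro t.
    specialize (H (- t)). rewrite Hodd in H. lra. }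
  lra.
Qed.

Definition low_jet (b : coef) : Prop :=
  b 0%nat 0%nat = 0 /\ b 1%nat 0%nat = 0 /\ b 0%nat 1%nat = 0 /\
  b 2%nat 0%nat = 0 /\ b 1%nat 1%nat = 0 /\ b 3%nat 0%nat = 0.

(* A nonnegative local polynomial of order >= 2 with no x^2 term has vanishing
   xy and x^3 terms: this is why F_(p,l) lies in I_(p,l). *)
Lemma low_jet_of_nonneg b :
  (forall x y, 0 <= affine_poly b x y) -> ord_ge2 b -> b 2%nat 0%nat = 0 -> low_jet b.
Proof.
  intros H [B00 [B10 B01]] B20.
  assert (B30 : b 3%nat 0%nat = 0).
  { apply (odd_lowest_coeff_zero 1 _ (b 4%nat 0%nat) 0 0). intro t.
    replace (t ^ (2 * 1 + 1) * _) with (affine_poly b t 0); [apply H |].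
    unfold affine_poly; simpl; rewrite B00, B10, B20; ring. }
  assert (B11 : b 1%nat 1%nat = 0).
  { apply (odd_lowest_coeff_zero 0 _ (b 0%nat 2%nat) 0 0). intro k.
    apply (lowest_coeff_nonneg 2 _
      (b 3%nat 0%nat + b 2%nat 1%nat * k + b 1%nat 2%nat * k ^ 2 + b 0%nat 3%nat * k ^ 3)
      (b 4%nat 0%nat + b 3%nat 1%nat * k + b 2%nat 2%nat * k ^ 2 + b 1%nat 3%nat * k ^ 3
       + b 0%nat 4%nat * k ^ 4) 0).
    intro t. replace (t ^ 2 * _) with (affine_poly b t (k * t)); [apply H |].
    unfold affine_poly; simpl; rewrite B00, B10, B01, B20; ring. }
  unfold low_jet; repeat split; assumption.
Qed.

Lemma H4_quartic f : H4 f -> exists c, f = quartic c.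
Proof. intros [c Hc]. exists c. apply functional_extensionality. exact Hc. Qed.

Lemma quartic_homogeneous c lam p : quartic c (smul lam p) = lam ^ 4 * quartic c p.
Proof. unfold quartic, smul, px, py, pz; simpl; ring. Qed.

Lemma affine_poly_quartic b x y : affine_poly b x y = quartic b (x, y, 1).
Proof. unfold quartic, affine_poly, px, py, pz; simpl; ring. Qed.

Definition swap_xy (p : pt) : pt := (py p, px p, pz p).

Definition swap_xz (p : pt) : pt := (pz p, py p, px p).

(* Coefficients of f(y, x, z) and of f(z, y, x). *)
Definition perm_xy (c : coef) : coef := fun i j => c j i.

Definition perm_xz (c : coef) : coef := fun i j => c (4 - i - j)%nat j.

Lemma quartic_perm_xy c p : quartic (perm_xy c) p = quartic c (swap_xy p).
Proof. unfold quartic, perm_xy, swap_xy, px, py, pz; simpl; ring. Qed.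

Lemma quartic_perm_xz c p : quartic (perm_xz c) p = quartic c (swap_xz p).
Proof. unfold quartic, perm_xz, swap_xz, px, py, pz; simpl; ring. Qed.

(* Linear conditions on the coefficients of f at e1 = (1:0:0).
   [sing_e1]: f is singular at e1 (no x^4, x^3 y, x^3 z terms). *)
Definition sing_e1 (c : coef) : Prop :=
  c 4%nat 0%nat = 0 /\ c 3%nat 1%nat = 0 /\ c 3%nat 0%nat = 0.

(* [tangent_y0]: moreover the quadratic part of f at e1 is a multiple of y^2 and
   the line y = 0 meets f at e1 with multiplicity >= 4 (no x^2 z^2, x^2 y z, x z^3). *)
Definition tangent_y0 (c : coef) : Prop :=
  sing_e1 c /\ c 2%nat 0%nat = 0 /\ c 2%nat 1%nat = 0 /\ c 1%nat 0%nat = 0.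

(* [tangent_yz]: the same for the line y = z: the quadratic part of f at e1 is a
   multiple of (y - z)^2 and its cubic part vanishes at (y, z) = (1, 1). *)
Definition tangent_yz (c : coef) : Prop :=
  sing_e1 c /\ c 2%nat 2%nat = c 2%nat 0%nat /\ c 2%nat 1%nat = - 2 * c 2%nat 0%nat /\
  c 1%nat 3%nat + c 1%nat 2%nat + c 1%nat 1%nat + c 1%nat 0%nat = 0.

Definition slice (c : coef) (k : nat) (y z : R) : R :=
  sumR (S k) (fun j => c (4 - k)%nat j * y ^ j * z ^ (k - j)).

Lemma quartic_near_e1 c lam w1 w2 w3 t :
  quartic c (lam + t * w1, t * w2, t * w3) =
    lam ^ 4 * c 4%nat 0%nat
  + lam ^ 3 * (4 * w1 * c 4%nat 0%nat + slice c 1 w2 w3) * t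
  + lam ^ 2 * (6 * w1 ^ 2 * c 4%nat 0%nat + 3 * w1 * slice c 1 w2 w3 + slice c 2 w2 w3) * t ^ 2
  + lam * (4 * w1 ^ 3 * c 4%nat 0%nat + 3 * w1 ^ 2 * slice c 1 w2 w3
           + 2 * w1 * slice c 2 w2 w3 + slice c 3 w2 w3) * t ^ 3
  + quartic c (w1, w2, w3) * t ^ 4.
Proof. unfold quartic, slice, px, py, pz; simpl; ring. Qed.

Definition comb (x y : R) (u v : pt) : pt :=
  (x * px u + y * px v, x * py u + y * py v, x * pz u + y * pz v).

Definition chart_pt (lam : R) (u v : pt) (x y : R) : pt :=
  (lam + px (comb x y u v), py (comb x y u v), pz (comb x y u v)).

Lemma chart_jets c b lam u v :
  (forall x y, affine_poly b x y = quartic c (chart_pt lam u v x y)) ->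
  forall x y w, w = comb x y u v ->
  b 0%nat 0%nat = lam ^ 4 * c 4%nat 0%nat /\
  b 1%nat 0%nat * x + b 0%nat 1%nat * y =
    lam ^ 3 * (4 * px w * c 4%nat 0%nat + slice c 1 (py w) (pz w)) /\
  b 2%nat 0%nat * x ^ 2 + b 1%nat 1%nat * x * y + b 0%nat 2%nat * y ^ 2 =
    lam ^ 2 * (6 * px w ^ 2 * c 4%nat 0%nat + 3 * px w * slice c 1 (py w) (pz w)
               + slice c 2 (py w) (pz w)) /\
  b 3%nat 0%nat * x ^ 3 + b 2%nat 1%nat * x ^ 2 * y + b 1%nat 2%nat * x * y ^ 2
    + b 0%nat 3%nat * y ^ 3 =
    lam * (4 * px w ^ 3 * c 4%nat 0%nat + 3 * px w ^ 2 * slice c 1 (py w) (pz w)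
           + 2 * px w * slice c 2 (py w) (pz w) + slice c 3 (py w) (pz w)).
Proof.
  intros H x y w Hw.
  assert (Ht : forall t, affine_poly b (t * x) (t * y)
                         = quartic c (lam + t * px w, t * py w, t * pz w)).
  { intro t. rewrite H. f_equal. rewrite Hw. unfold chart_pt, comb, px, py, pz; simpl. pt_eq. }
  apply poly4_coeffs_eq with
    (a4 := b 4%nat 0%nat * x ^ 4 + b 3%nat 1%nat * x ^ 3 * y + b 2%nat 2%nat * x ^ 2 * y ^ 2
           + b 1%nat 3%nat * x * y ^ 3 + b 0%nat 4%nat * y ^ 4)
    (b4 := quartic c (px w, py w, pz w)).
  intro t. rewrite <- quartic_near_e1, <- Ht. unfold affine_poly; simpl; ring.
Qed.

Lemma comb_1_0 u v : comb 1 0 u v = u.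
Proof. destruct u as [[u1 u2] u3]. unfold comb, px, py, pz; simpl. pt_eq. Qed.

Lemma comb_0_1 u v : comb 0 1 u v = v.
Proof. destruct v as [[v1 v2] v3]. unfold comb, px, py, pz; simpl. pt_eq. Qed.

Lemma comb_1_1 u v : comb 1 1 u v = (px u + px v, py u + py v, pz u + pz v).
Proof. unfold comb. pt_eq. Qed.

Definition e1_chart (c b : coef) (u v : pt) : Prop :=
  exists lam, lam <> 0 /\ py u * pz v - pz u * py v <> 0 /\
    forall x y, affine_poly b x y = quartic c (chart_pt lam u v x y).

Lemma sing_of_e1_chart c b u v : e1_chart c b u v -> ord_ge2 b -> sing_e1 c.
Proof.
  intros [lam [Hlam [Hdet H]]] [B00 [B10 B01]].
  destruct (chart_jets _ _ _ _ _ H 1 0 u (eq_sym (comb_1_0 u v))) as [J0 [Ju _]].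
  destruct (chart_jets _ _ _ _ _ H 0 1 v (eq_sym (comb_0_1 u v))) as [_ [Jv _]].
  assert (C40 : c 4%nat 0%nat = 0).
  { apply (nonzero_factor (lam ^ 4)); [apply pow_nonzero; exact Hlam | lra]. }
  rewrite C40, B10, B01 in *. unfold slice in Ju, Jv; simpl in Ju, Jv.
  assert (Su : c 3%nat 1%nat * py u + c 3%nat 0%nat * pz u = 0).
  { apply (nonzero_factor (lam ^ 3)); [apply pow_nonzero; exact Hlam | lra]. }
  assert (Sv : c 3%nat 1%nat * py v + c 3%nat 0%nat * pz v = 0).
  { apply (nonzero_factor (lam ^ 3)); [apply pow_nonzero; exact Hlam | lra]. }
  destruct (lin2_zero _ _ _ _ _ _ Su Sv Hdet). unfold sing_e1; repeat split; assumption.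
Qed.

Lemma tangent_of_e1_chart c b u v : e1_chart c b u v -> low_jet b ->
  sing_e1 c /\ slice c 2 (py u) (pz u) = 0 /\
  slice c 2 (py u + py v) (pz u + pz v) = slice c 2 (py v) (pz v) /\
  slice c 3 (py u) (pz u) = 0.
Proof.
  intros Hch [B00 [B10 [B01 [B20 [B11 B30]]]]].
  assert (Hsing : sing_e1 c).
  { apply (sing_of_e1_chart c b u v Hch). repeat split; assumption. }
  destruct Hch as [lam [Hlam [_ H]]]. pose proof Hsing as [C40 [C31 C30]].
  assert (S1 : forall y z, slice c 1 y z = 0).
  { intros y z. unfold slice; simpl. rewrite C31, C30; ring. }
  destruct (chart_jets _ _ _ _ _ H 1 0 u (eq_sym (comb_1_0 u v))) as [_ [_ [Ju2 Ju3]]].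
  destruct (chart_jets _ _ _ _ _ H 0 1 v (eq_sym (comb_0_1 u v))) as [_ [_ [Jv2 _]]].
  destruct (chart_jets _ _ _ _ _ H 1 1 _ (eq_sym (comb_1_1 u v))) as [_ [_ [Juv2 _]]].
  cbn [px py pz fst snd] in Juv2. rewrite !S1, C40, B20, B11, B30 in *.
  assert (Q2u : slice c 2 (py u) (pz u) = 0).
  { apply (nonzero_factor (lam ^ 2)); [apply pow_nonzero; exact Hlam | lra]. }
  split; [exact Hsing | split; [exact Q2u | split]].
  - apply Rminus_diag_uniq. apply (nonzero_factor (lam ^ 2)); [apply pow_nonzero; exact Hlam | lra].
  - rewrite Q2u in Ju3. apply (nonzero_factor lam); [exact Hlam | lra].
Qed.

Lemma tangent_y0_of_e1_chart c b u v :
  e1_chart c b u v -> py u = 0 -> low_jet b -> tangent_y0 c.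
Proof.
  intros Hch Hu Hlow. pose proof Hch as [_ [_ [Hdet _]]].
  destruct (tangent_of_e1_chart c b u v Hch Hlow) as [Hs [Q2 [P2 Q3]]].
  rewrite Hu in *. unfold slice in Q2, P2, Q3; simpl in Q2, P2, Q3.
  assert (Hu3 : pz u <> 0) by (intro Z; apply Hdet; rewrite Z; ring).
  assert (Hv2 : py v <> 0) by (intro Z; apply Hdet; rewrite Z; ring).
  assert (C20 : c 2%nat 0%nat = 0).
  { apply (nonzero_factor (pz u ^ 2)); [apply pow_nonzero; exact Hu3 | lra]. }
  assert (C21 : c 2%nat 1%nat = 0).
  { apply (nonzero_factor (py v * pz u)); [apply Rmult_integral_contrapositive; tauto |].
    rewrite C20 in P2. lra. }
  assert (C10 : c 1%nat 0%nat = 0).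
  { apply (nonzero_factor (pz u ^ 3)); [apply pow_nonzero; exact Hu3 | lra]. }
  split; [exact Hs | repeat split; assumption].
Qed.

Lemma tangent_yz_of_e1_chart c b u v :
  e1_chart c b u v -> py u = pz u -> low_jet b -> tangent_yz c.
Proof.
  intros Hch Hu Hlow. pose proof Hch as [_ [_ [Hdet _]]].
  destruct (tangent_of_e1_chart c b u v Hch Hlow) as [Hs [Q2 [P2 Q3]]].
  rewrite Hu in *. set (s := pz u) in *.
  unfold slice in Q2, P2, Q3; simpl in Q2, P2, Q3.
  assert (Hs0 : s <> 0) by (intro Z; apply Hdet; rewrite Z; ring).
  assert (Hv : pz v - py v <> 0) by (intro Z; apply Hdet; nra).
  assert (E2 : c 2%nat 2%nat + c 2%nat 1%nat + c 2%nat 0%nat = 0).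
  { apply (nonzero_factor (s ^ 2)); [apply pow_nonzero; exact Hs0 | lra]. }
  assert (C22 : c 2%nat 2%nat = c 2%nat 0%nat).
  { apply Rminus_diag_uniq. apply (nonzero_factor (s * (py v - pz v))).
    - apply Rmult_integral_contrapositive. split; [exact Hs0 | lra].
    - replace (c 2%nat 1%nat) with (- c 2%nat 2%nat - c 2%nat 0%nat) in P2 by lra. lra. }
  split; [exact Hs | split; [exact C22 | split; [lra |]]].
  apply (nonzero_factor (s ^ 3)); [apply pow_nonzero; exact Hs0 | lra].
Qed.

Definition col (m : mat3) (j : nat) : pt := (m 0%nat j, m 1%nat j, m 2%nat j).

Lemma centered_column m p : centered_at m p ->
  det3 m <> 0 /\ exists lam, lam <> 0 /\
    m 0%nat 2%nat = lam * px p /\ m 1%nat 2%nat = lam * py p /\ m 2%nat 2%nat = lam * pz p.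
Proof.
  intros [Hdet [lam [Hlam Hm]]]. split; [exact Hdet |]. exists lam.
  unfold mapply, smul, e3, px, py, pz in Hm; simpl in Hm. injection Hm; intros.
  unfold px, py, pz. repeat split; [exact Hlam | lra | lra | lra].
Qed.

Lemma e1_chart_at_e1 c m b :
  centered_at m e1 -> local_coeffs (quartic c) m b -> e1_chart c b (col m 0) (col m 1).
Proof.
  intros Hm Hloc. destruct (centered_column m e1 Hm) as [Hdet [lam [Hlam [M02 [M12 M22]]]]].
  unfold e1, px, py, pz in M02, M12, M22; simpl in M02, M12, M22.
  exists lam. split; [exact Hlam | split].
  - intro Z. apply Hdet. unfold col, px, py, pz in Z; simpl in Z.
    unfold det3. rewrite M02, M12, M22. nra.
  - intros x y. rewrite <- Hloc. f_equal.
    unfold mapply, chart_pt, comb, col, px, py, pz; simpl. rewrite M02, M12, M22. pt_eq.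
Qed.

Lemma e1_chart_at_e2 c m b :
  centered_at m e2 -> local_coeffs (quartic c) m b ->
  e1_chart (perm_xy c) b (swap_xy (col m 0)) (swap_xy (col m 1)).
Proof.
  intros Hm Hloc. destruct (centered_column m e2 Hm) as [Hdet [lam [Hlam [M02 [M12 M22]]]]].
  unfold e2, px, py, pz in M02, M12, M22; simpl in M02, M12, M22.
  exists lam. split; [exact Hlam | split].
  - intro Z. apply Hdet. unfold swap_xy, col, px, py, pz in Z; simpl in Z.
    unfold det3. rewrite M02, M12, M22. nra.
  - intros x y. rewrite <- Hloc, quartic_perm_xy. f_equal.
    unfold mapply, chart_pt, comb, swap_xy, col, px, py, pz; simpl. rewrite M02, M12, M22. pt_eq.
Qed.

Lemma e1_chart_at_e3 c m b :
  centered_at m e3 -> local_coeffs (quartic c) m b ->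
  e1_chart (perm_xz c) b (swap_xz (col m 0)) (swap_xz (col m 1)).
Proof.
  intros Hm Hloc. destruct (centered_column m e3 Hm) as [Hdet [lam [Hlam [M02 [M12 M22]]]]].
  unfold e3, px, py, pz in M02, M12, M22; simpl in M02, M12, M22.
  exists lam. split; [exact Hlam | split].
  - intro Z. apply Hdet. unfold swap_xz, col, px, py, pz in Z; simpl in Z.
    unfold det3. rewrite M02, M12, M22. nra.
  - intros x y. rewrite <- Hloc, quartic_perm_xz. f_equal.
    unfold mapply, chart_pt, comb, swap_xz, col, px, py, pz; simpl. rewrite M02, M12, M22. pt_eq.
Qed.

Lemma sing_e2_of_Ipt c : Ipt e2 (quartic c) -> sing_e1 (perm_xy c).
Proof.
  intros [_ [m [b [Hm [Hloc Hord]]]]].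
  exact (sing_of_e1_chart _ _ _ _ (e1_chart_at_e2 c m b Hm Hloc) Hord).
Qed.

Lemma sing_e3_of_Ipt c : Ipt e3 (quartic c) -> sing_e1 (perm_xz c).
Proof.
  intros [_ [m [b [Hm [Hloc Hord]]]]].
  exact (sing_of_e1_chart _ _ _ _ (e1_chart_at_e3 c m b Hm Hloc) Hord).
Qed.

Lemma tangent_y0_of_Ipl c : Ipl e1 (join e1 e3) (quartic c) -> tangent_y0 c.
Proof.
  intros [_ [m [b [[Hm Hl] [Hloc Hlow]]]]].
  apply (tangent_y0_of_e1_chart c b (col m 0) (col m 1) (e1_chart_at_e1 c m b Hm Hloc));
    [| exact Hlow].
  unfold on_line, join, cross, dot, mapply, e1, e3, col, px, py, pz in *; simpl in *; lra.
Qed.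

(* The line e2 \/ e3 is x = 0, which the exchange of x and y sends to y = 0. *)
Lemma tangent_x0_of_Ipl c : Ipl e2 (join e2 e3) (quartic c) -> tangent_y0 (perm_xy c).
Proof.
  intros [_ [m [b [[Hm Hl] [Hloc Hlow]]]]].
  apply (tangent_y0_of_e1_chart _ b _ _ (e1_chart_at_e2 c m b Hm Hloc)); [| exact Hlow].
  unfold on_line, join, cross, dot, mapply, e2, e3, swap_xy, col, px, py, pz in *;
    simpl in *; lra.
Qed.

(* The line e1 \/ e4 is y = z. *)
Lemma tangent_yz_of_Ipl c : Ipl e1 (join e1 e4) (quartic c) -> tangent_yz c.
Proof.
  intros [_ [m [b [[Hm Hl] [Hloc Hlow]]]]].
  apply (tangent_yz_of_e1_chart c b (col m 0) (col m 1) (e1_chart_at_e1 c m b Hm Hloc));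
    [| exact Hlow].
  unfold on_line, join, cross, dot, mapply, e1, e4, col, px, py, pz in *; simpl in *; lra.
Qed.

Lemma tilde_poly_origin b : tilde_poly b 0 0 = b 2%nat 0%nat.
Proof. unfold tilde_poly; simpl; ring. Qed.

Lemma Ipl_of_Fpl p n f : Fpl p n f -> Ipl p n f.
Proof.
  intros [[Hf Hnn] [_ [m [b [Hm [Hloc [Hord H20]]]]]]].
  split; [exact Hf |]. exists m, b. split; [exact Hm | split; [exact Hloc |]].
  apply low_jet_of_nonneg; [| exact Hord | rewrite <- tilde_poly_origin; exact H20].
  intros x y. rewrite <- Hloc. apply Hnn.
Qed.

Lemma vanishes_at_center f m b p :
  H4 f -> centered_at m p -> local_coeffs f m b -> b 0%nat 0%nat = 0 -> f p = 0.
Proof.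
  intros Hf [_ [lam [Hlam Hm]]] Hloc B00.
  destruct (H4_quartic f Hf) as [c ->].
  apply (nonzero_factor (lam ^ 4)); [apply pow_nonzero; exact Hlam |].
  rewrite <- quartic_homogeneous, <- Hm. unfold e3. rewrite Hloc.
  unfold affine_poly; simpl. rewrite B00. ring.
Qed.

Lemma Fpt_of_Ipt s f : P34 f -> Ipt s f -> Fpt s f.
Proof.
  intros HP [Hf [m [b [Hm [Hloc [B00 _]]]]]].
  split; [exact HP | exact (vanishes_at_center f m b s Hf Hm Hloc B00)].
Qed.

Lemma Fpl_of_Ipl p n f : P34 f -> Ipl p n f -> Fpl p n f.
Proof.
  intros HP [Hf [m [b [Hm [Hloc [B00 [B10 [B01 [B20 _]]]]]]]]].
  split; [exact HP | split].
  - exact (vanishes_at_center f m b p Hf (proj1 Hm) Hloc B00).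
  - exists m, b. split; [exact Hm | split; [exact Hloc |]].
    split; [repeat split; assumption | rewrite tilde_poly_origin; exact B20].
Qed.

Lemma sing_of_minimum c : (forall p, 0 <= quartic c p) -> quartic c e1 = 0 -> sing_e1 c.
Proof.
  intros Hnn H0.
  assert (C40 : c 4%nat 0%nat = 0).
  { rewrite <- H0. unfold quartic, e1, px, py, pz; simpl; ring. }
  assert (C31 : c 3%nat 1%nat = 0).
  { apply (odd_lowest_coeff_zero 0 _ (c 2%nat 2%nat) (c 1%nat 3%nat) (c 0%nat 4%nat)).
    intro t. replace (t ^ (2 * 0 + 1) * _) with (quartic c (1, t, 0)); [apply Hnn |].
    unfold quartic, px, py, pz; simpl. rewrite C40. ring. }
  assert (C30 : c 3%nat 0%nat = 0).
  { apply (odd_lowest_coeff_zero 0 _ (c 2%nat 0%nat) (c 1%nat 0%nat) (c 0%nat 0%nat)).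
    intro t. replace (t ^ (2 * 0 + 1) * _) with (quartic c (1, 0, t)); [apply Hnn |].
    unfold quartic, px, py, pz; simpl. rewrite C40. ring. }
  repeat split; assumption.
Qed.

Lemma sing_e2_of_Fpt c : Fpt e2 (quartic c) -> sing_e1 (perm_xy c).
Proof.
  intros [[_ Hnn] H0]. apply sing_of_minimum; [| rewrite quartic_perm_xy; exact H0].
  intro p. rewrite quartic_perm_xy. apply Hnn.
Qed.

Lemma sing_e3_of_Fpt c : Fpt e3 (quartic c) -> sing_e1 (perm_xz c).
Proof.
  intros [[_ Hnn] H0]. apply sing_of_minimum; [| rewrite quartic_perm_xz; exact H0].
  intro p. rewrite quartic_perm_xz. apply Hnn.
Qed.

(* Explicit charts: (x, y) |-> (1 : y : x) at e1 with x-axis on y = 0,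
   (x, y) |-> (y : 1 : x) at e2 with x-axis on x = 0, the identity at e3, and
   (x, y) |-> (1 : x : x + y) at e1 with x-axis on y = z. *)

Definition chart_e1 : mat3 := fun i j =>
  match i, j with 0%nat, 2%nat | 1%nat, 1%nat | 2%nat, 0%nat => 1 | _, _ => 0 end.

Definition chart_e2 : mat3 := fun i j =>
  match i, j with 0%nat, 1%nat | 1%nat, 2%nat | 2%nat, 0%nat => 1 | _, _ => 0 end.

Definition chart_e3 : mat3 := fun i j =>
  match i, j with 0%nat, 0%nat | 1%nat, 1%nat | 2%nat, 2%nat => 1 | _, _ => 0 end.

Definition chart_e1_yz : mat3 := fun i j =>
  match i, j with 0%nat, 2%nat | 1%nat, 0%nat | 2%nat, 0%nat | 2%nat, 1%nat => 1 | _, _ => 0 end.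

Ltac check_centered :=
  split; [unfold det3; simpl; lra |
          exists 1; split; [lra | unfold mapply, smul, px, py, pz; simpl; pt_eq]].

Ltac check_on_line :=
  unfold on_line, join, cross, dot, mapply, px, py, pz; simpl; ring.

Lemma chart_e1_local c : local_coeffs (quartic c) chart_e1 (perm_xz c).
Proof.
  intros x y. rewrite affine_poly_quartic, quartic_perm_xz. f_equal.
  unfold mapply, swap_xz, px, py, pz; simpl. pt_eq.
Qed.

Lemma chart_e2_local c : local_coeffs (quartic c) chart_e2 (perm_xz (perm_xy c)).
Proof.
  intros x y. rewrite affine_poly_quartic, quartic_perm_xz, quartic_perm_xy. f_equal.
  unfold mapply, swap_xz, swap_xy, px, py, pz; simpl. pt_eq.
Qed.

Lemma chart_e3_local c : local_coeffs (quartic c) chart_e3 c.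
Proof.
  intros x y. rewrite affine_poly_quartic. f_equal.
  unfold mapply, px, py, pz; simpl. pt_eq.
Qed.

Lemma Ipl_e1_y0_of_tangent c : tangent_y0 c -> Ipl e1 (join e1 e3) (quartic c).
Proof.
  intros [[C40 [C31 C30]] [C20 [C21 C10]]]. split; [exists c; reflexivity |].
  exists chart_e1, (perm_xz c). split; [split; [check_centered | check_on_line] |].
  split; [apply chart_e1_local | unfold perm_xz; simpl; repeat split; assumption].
Qed.

Lemma Ipl_e2_x0_of_tangent c : tangent_y0 (perm_xy c) -> Ipl e2 (join e2 e3) (quartic c).
Proof.
  intros [[C40 [C31 C30]] [C20 [C21 C10]]]. split; [exists c; reflexivity |].
  exists chart_e2, (perm_xz (perm_xy c)). split; [split; [check_centered | check_on_line] |].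
  split; [apply chart_e2_local | unfold perm_xz; simpl; repeat split; assumption].
Qed.

Lemma Ipt_e2_of_sing c : sing_e1 (perm_xy c) -> Ipt e2 (quartic c).
Proof.
  intros [C40 [C31 C30]]. split; [exists c; reflexivity |].
  exists chart_e2, (perm_xz (perm_xy c)). split; [check_centered |].
  split; [apply chart_e2_local | unfold perm_xz; simpl; repeat split; assumption].
Qed.

Lemma Ipt_e3_of_sing c : sing_e1 (perm_xz c) -> Ipt e3 (quartic c).
Proof.
  intros [C00 [C01 C10]]. split; [exists c; reflexivity |].
  exists chart_e3, c. split; [check_centered |].
  split; [apply chart_e3_local | repeat split; assumption].
Qed.

(* Under all conditions of T_4, f = c20 x^2 (y - z)^2 + c11 x y z (z - y) + c02 y^2 z^2;
   these are its local coefficients in the chart (x, y) |-> (1 : x : x + y). *)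
Definition local_e1_yz (c : coef) : coef := fun i j =>
  match i, j with
  | 0%nat, 2%nat => c 2%nat 0%nat
  | 2%nat, 1%nat | 1%nat, 2%nat => c 1%nat 1%nat
  | 4%nat, 0%nat | 2%nat, 2%nat => c 0%nat 2%nat
  | 3%nat, 1%nat => 2 * c 0%nat 2%nat
  | _, _ => 0
  end.

Lemma Ipl_e1_yz_of_tangent c :
  sing_e1 (perm_xy c) -> sing_e1 (perm_xz c) -> tangent_yz c ->
  Ipl e1 (join e1 e4) (quartic c).
Proof.
  intros [C04 [C13 C03]] [C00 [C01 C10]] [[C40 [C31 C30]] [C22 [C21 C1]]].
  unfold perm_xy, perm_xz in *; simpl in *.
  split; [exists c; reflexivity |].
  exists chart_e1_yz, (local_e1_yz c). split; [split; [check_centered | check_on_line] |].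
  split; [| unfold local_e1_yz; repeat split].
  intros x y. unfold quartic, affine_poly, local_e1_yz, mapply, px, py, pz; simpl.
  rewrite C04, C13, C03, C00, C01, C10, C40, C31, C30, C22, C21.
  replace (c 1%nat 2%nat) with (- c 1%nat 1%nat) by lra. ring.
Qed.

Definition config_cond (i : nat) (c : coef) : Prop :=
  match i with
  | 1%nat => tangent_y0 c
  | 2%nat => sing_e1 (perm_xy c) /\ tangent_y0 c
  | 3%nat => tangent_y0 c /\ tangent_y0 (perm_xy c)
  | _ => (sing_e1 (perm_xy c) /\ sing_e1 (perm_xz c)) /\ tangent_yz c
  end.

Definition has_config_cond (i : nat) (f : pt -> R) : Prop :=
  exists c, f = quartic c /\ config_cond i c.

Ltac destruct_conj := repeat match goal with H : _ /\ _ |- _ => destruct H end.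

Definition lin_coef (a : R) (c1 c2 : coef) : coef := fun i j => a * c1 i j + c2 i j.

Lemma quartic_lin a c1 c2 p : quartic (lin_coef a c1 c2) p = a * quartic c1 p + quartic c2 p.
Proof. unfold quartic, lin_coef; simpl; ring. Qed.

Lemma sing_e1_lin a c1 c2 : sing_e1 c1 -> sing_e1 c2 -> sing_e1 (lin_coef a c1 c2).
Proof. unfold sing_e1, lin_coef; intros; destruct_conj; repeat split; nra. Qed.

Lemma tangent_y0_lin a c1 c2 : tangent_y0 c1 -> tangent_y0 c2 -> tangent_y0 (lin_coef a c1 c2).
Proof. unfold tangent_y0, sing_e1, lin_coef; intros; destruct_conj; repeat split; nra. Qed.

Lemma tangent_yz_lin a c1 c2 : tangent_yz c1 -> tangent_yz c2 -> tangent_yz (lin_coef a c1 c2).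
Proof. unfold tangent_yz, sing_e1, lin_coef; intros; destruct_conj; repeat split; nra. Qed.

Lemma perm_xy_lin a c1 c2 : perm_xy (lin_coef a c1 c2) = lin_coef a (perm_xy c1) (perm_xy c2).
Proof. reflexivity. Qed.

Lemma perm_xz_lin a c1 c2 : perm_xz (lin_coef a c1 c2) = lin_coef a (perm_xz c1) (perm_xz c2).
Proof. reflexivity. Qed.

Lemma config_cond_lin i a c1 c2 :
  config_cond i c1 -> config_cond i c2 -> config_cond i (lin_coef a c1 c2).
Proof.
  destruct i as [|[|[|[|i]]]]; simpl; intros; destruct_conj;
    rewrite ?perm_xy_lin, ?perm_xz_lin;
    repeat match goal with |- _ /\ _ => split end;
    first [ apply sing_e1_lin | apply tangent_y0_lin | apply tangent_yz_lin ]; assumption.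
Qed.

Lemma config_cond_zero i : config_cond i (fun _ _ => 0).
Proof.
  destruct i as [|[|[|[|i]]]];
    unfold config_cond, tangent_y0, tangent_yz, sing_e1, perm_xy, perm_xz; repeat split; lra.
Qed.

Lemma span_config_cond i (F : (pt -> R) -> Prop) f :
  (forall g, F g -> has_config_cond i g) -> in_span F f -> has_config_cond i f.
Proof.
  intros HF [l [Hl Hf]].
  assert (Hlin : has_config_cond i (lincomb l)).
  { clear Hf. induction l as [| [a g] l IH].
    - exists (fun _ _ => 0). split; [| apply config_cond_zero].
      apply functional_extensionality. intro p. unfold quartic; simpl; ring.
    - destruct (HF g (Hl (a, g) (or_introl eq_refl))) as [c1 [-> C1]].
      destruct IH as [c2 [H2 C2]]; [intros q Hq; apply Hl; right; exact Hq |].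
      exists (lin_coef a c1 c2). split; [| apply config_cond_lin; assumption].
      apply functional_extensionality. intro p. simpl. rewrite quartic_lin, H2. reflexivity. }
  destruct Hlin as [c [Hc C]]. exists c. split; [| exact C].
  apply functional_extensionality. intro p. rewrite Hf, Hc. reflexivity.
Qed.

Lemma config_cond_of_IS i f : (1 <= i <= 4)%nat -> IS (Tconf i) f -> has_config_cond i f.
Proof.
  intros Hi [Hf [Hpts Hprs]]. destruct (H4_quartic f Hf) as [c ->].
  exists c. split; [reflexivity |].
  destruct i as [|[|[|[|[|i]]]]]; try lia; simpl in Hpts, Hprs |- *.
  - exact (tangent_y0_of_Ipl c (Hprs _ (or_introl eq_refl))).
  - split; [exact (sing_e2_of_Ipt c (Hpts _ (or_introl eq_refl))) |].
    exact (tangent_y0_of_Ipl c (Hprs _ (or_introl eq_refl))).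
  - split; [exact (tangent_y0_of_Ipl c (Hprs _ (or_introl eq_refl))) |].
    exact (tangent_x0_of_Ipl c (Hprs _ (or_intror (or_introl eq_refl)))).
  - split; [split |].
    + exact (sing_e2_of_Ipt c (Hpts _ (or_introl eq_refl))).
    + exact (sing_e3_of_Ipt c (Hpts _ (or_intror (or_introl eq_refl)))).
    + exact (tangent_yz_of_Ipl c (Hprs _ (or_introl eq_refl))).
Qed.

Lemma IS_of_config_cond i c : (1 <= i <= 4)%nat -> config_cond i c -> IS (Tconf i) (quartic c).
Proof.
  intros Hi C. split; [exists c; reflexivity |].
  destruct i as [|[|[|[|[|i]]]]]; try lia; simpl in C; destruct_conj;
    split; intros q Hq; simpl in Hq; repeat destruct Hq as [<- | Hq]; try contradiction.
  - apply Ipl_e1_y0_of_tangent; assumption.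
  - apply Ipt_e2_of_sing; assumption.
  - apply Ipl_e1_y0_of_tangent; assumption.
  - apply Ipl_e1_y0_of_tangent; assumption.
  - apply Ipl_e2_x0_of_tangent; assumption.
  - apply Ipt_e2_of_sing; assumption.
  - apply Ipt_e3_of_sing; assumption.
  - apply Ipl_e1_yz_of_tangent; assumption.
Qed.

Lemma FS_of_IS S f : P34 f -> IS S f -> FS S f.
Proof.
  intros HP [_ [Hpts Hprs]]. split.
  - intros s Hs. exact (Fpt_of_Ipt s f HP (Hpts s Hs)).
  - intros q Hq. exact (Fpl_of_Ipl _ _ f HP (Hprs q Hq)).
Qed.

Lemma IS_of_FS i f : (1 <= i <= 4)%nat -> FS (Tconf i) f -> IS (Tconf i) f.
Proof.
  intros Hi [Hpts Hprs].
  assert (Hf : H4 f).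
  { destruct i as [|[|[|[|[|i]]]]]; try lia;
      exact (proj1 (proj1 (Hprs _ (or_introl eq_refl)))). }
  destruct (H4_quartic f Hf) as [c ->].
  split; [exact Hf | split].
  - intros s Hs.
    assert (Hs' : s = e2 \/ s = e3).
    { destruct i as [|[|[|[|[|i]]]]]; try lia; simpl in Hs;
      repeat destruct Hs as [<- | Hs]; auto; contradiction. }
    destruct Hs' as [-> | ->].
    + apply Ipt_e2_of_sing, sing_e2_of_Fpt, Hpts, Hs.
    + apply Ipt_e3_of_sing, sing_e3_of_Fpt, Hpts, Hs.
  - intros q Hq. apply Ipl_of_Fpl, Hprs, Hq.
Qed.

Definition quad (a b c d e f : R) (p : pt) : R :=
  a * px p ^ 2 + b * py p ^ 2 + c * pz p ^ 2
  + d * px p * py p + e * px p * pz p + f * py p * pz p.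

Definition quad_sq_coef (a b c d e f : R) : coef := fun i j =>
  match i, j with
  | 4%nat, 0%nat => a ^ 2
  | 0%nat, 4%nat => b ^ 2
  | 0%nat, 0%nat => c ^ 2
  | 3%nat, 1%nat => 2 * a * d
  | 3%nat, 0%nat => 2 * a * e
  | 1%nat, 3%nat => 2 * b * d
  | 0%nat, 3%nat => 2 * b * f
  | 1%nat, 0%nat => 2 * c * e
  | 0%nat, 1%nat => 2 * c * f
  | 2%nat, 2%nat => 2 * a * b + d ^ 2
  | 2%nat, 0%nat => 2 * a * c + e ^ 2
  | 0%nat, 2%nat => 2 * b * c + f ^ 2
  | 2%nat, 1%nat => 2 * a * f + 2 * d * e
  | 1%nat, 2%nat => 2 * b * e + 2 * d * f
  | 1%nat, 1%nat => 2 * c * d + 2 * e * f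
  | _, _ => 0
  end.

Definition sq_quad (a b c d e f : R) (p : pt) : R := quad a b c d e f p ^ 2.

Lemma sq_quad_quartic a b c d e f : sq_quad a b c d e f = quartic (quad_sq_coef a b c d e f).
Proof.
  apply functional_extensionality. intro p.
  unfold sq_quad, quad, quartic, quad_sq_coef; simpl; ring.
Qed.

Lemma sq_quad_in_FS i a b c d e f :
  (1 <= i <= 4)%nat -> config_cond i (quad_sq_coef a b c d e f) ->
  FS (Tconf i) (sq_quad a b c d e f).
Proof.
  intros Hi C. apply FS_of_IS.
  - split; [exists (quad_sq_coef a b c d e f); intro p; rewrite sq_quad_quartic; reflexivity |].
    intro p. apply pow2_ge_0.
  - rewrite sq_quad_quartic. exact (IS_of_config_cond i _ Hi C).
Qed.

(* Each quartic satisfying [config_cond i] as a linear combination of squares: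
   T_1: (xy)^2, (xy + y^2)^2, (xy + yz)^2, (xy + z^2)^2, y^4, (y^2 + yz)^2, (yz)^2,
   (yz + z^2)^2, z^4; T_2 and T_3 use subsets of these; T_4 uses (xy - xz)^2,
   (yz)^2 and (xy - xz + yz)^2. *)
Definition decomposition (i : nat) (c : coef) : list (R * (pt -> R)) :=
  let c22 := c 2%nat 2%nat in let c13 := c 1%nat 3%nat in let c12 := c 1%nat 2%nat in
  let c11 := c 1%nat 1%nat in let c04 := c 0%nat 4%nat in let c03 := c 0%nat 3%nat in
  let c02 := c 0%nat 2%nat in let c01 := c 0%nat 1%nat in let c00 := c 0%nat 0%nat in
  let c20 := c 2%nat 0%nat in
  match i with
  | 1%nat =>
    [(c22 - c13 / 2 - c12 / 2 - c11 / 2, sq_quad 0 0 0 1 0 0);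
     (c13 / 2, sq_quad 0 1 0 1 0 0); (c12 / 2, sq_quad 0 0 0 1 0 1);
     (c11 / 2, sq_quad 0 0 1 1 0 0); (c04 - c13 / 2 - c03 / 2, sq_quad 0 1 0 0 0 0);
     (c03 / 2, sq_quad 0 1 0 0 0 1); (c02 - c12 / 2 - c03 / 2 - c01 / 2, sq_quad 0 0 0 0 0 1);
     (c01 / 2, sq_quad 0 0 1 0 0 1); (c00 - c11 / 2 - c01 / 2, sq_quad 0 0 1 0 0 0)]
  | 2%nat =>
    [(c22 - c12 / 2 - c11 / 2, sq_quad 0 0 0 1 0 0); (c12 / 2, sq_quad 0 0 0 1 0 1);
     (c11 / 2, sq_quad 0 0 1 1 0 0); (c02 - c12 / 2 - c01 / 2, sq_quad 0 0 0 0 0 1);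
     (c01 / 2, sq_quad 0 0 1 0 0 1); (c00 - c11 / 2 - c01 / 2, sq_quad 0 0 1 0 0 0)]
  | 3%nat =>
    [(c22 - c11 / 2, sq_quad 0 0 0 1 0 0); (c11 / 2, sq_quad 0 0 1 1 0 0);
     (c00 - c11 / 2, sq_quad 0 0 1 0 0 0)]
  | _ =>
    [(c20 + c11 / 2, sq_quad 0 0 0 1 (-1) 0); (c02 + c11 / 2, sq_quad 0 0 0 0 0 1);
     (- (c11 / 2), sq_quad 0 0 0 1 (-1) 1)]
  end.

Lemma decomposition_in_FS i c :
  (1 <= i <= 4)%nat -> forall q, In q (decomposition i c) -> FS (Tconf i) (snd q).
Proof.
  intros Hi q Hq.
  destruct i as [|[|[|[|[|i]]]]]; try lia; simpl in Hq;
    repeat destruct Hq as [<- | Hq]; try contradiction;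
    apply sq_quad_in_FS; try exact Hi;
    unfold config_cond, tangent_y0, tangent_yz, sing_e1, perm_xy, perm_xz, quad_sq_coef; simpl;
    repeat split; ring.
Qed.

Ltac rewrite_coeffs :=
  repeat match goal with H : ?c _ _ = _ |- _ => rewrite H; clear H end.

Lemma decomposition_sum i c :
  (1 <= i <= 4)%nat -> config_cond i c -> forall p, quartic c p = lincomb (decomposition i c) p.
Proof.
  intros Hi C p.
  destruct i as [|[|[|[|[|i]]]]]; try lia; simpl in C;
    unfold tangent_y0, tangent_yz, sing_e1, perm_xy, perm_xz in C; simpl in C; destruct_conj;
    unfold decomposition, lincomb, sq_quad, quad, quartic; simpl.
  1-3: rewrite_coeffs; field.
  assert (C12 : c 1%nat 2%nat = - c 1%nat 1%nat) by lra. rewrite_coeffs; field.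
Qed.

Theorem mainTheorem10 :
  forall i : nat, (1 <= i <= 4)%nat ->
    forall f : pt -> R, in_span (FS (Tconf i)) f <-> IS (Tconf i) f.
Proof.
  intros i Hi f. split.
  - intro Hspan.
    assert (HF : forall g, FS (Tconf i) g -> has_config_cond i g)
      by (intros g Hg; exact (config_cond_of_IS i g Hi (IS_of_FS i g Hi Hg))).
    destruct (span_config_cond i _ f HF Hspan) as [c [-> C]].
    exact (IS_of_config_cond i c Hi C).
  - intro HI. destruct (config_cond_of_IS i f Hi HI) as [c [-> C]].
    exists (decomposition i c). split.
    + exact (decomposition_in_FS i c Hi).
    + exact (decomposition_sum i c Hi C).
Qed.
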